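(* Let $n\ge2$, $T\ge2$, $G=([T],\mathcal{E})$ a connected undirected graph with incidence matrix $D$ (any orientation) and $M=D\otimes I_n$. For each $t\in[T]$ let $G_t=([n],\mathcal{E}_t)$ be an undirected graph and $C_t\in\{-1,1,0\}^{|\mathcal{E}_t|\times n}$ the incidence matrix of some orientation of its edges; let $C=\mathrm{blockdiag}(C_1,\dots,C_T)$ and $O_T=[C_1^\top\ \cdots\ C_T^\top]^\top$. Let $P=I_T\otimes(I_n-\frac1n\mathbf{1}_n\mathbf{1}_n^\top)$. If $\mu>0$ and $\mathrm{rank}(O_T)=n-1$, then $\mathrm{null}(\mu M^\top M+C^\top C)=\mathrm{span}(\mathbf{1}_{nT})$. Consequently, the column space of $P$ is contained in the column space of $\mu M^\top M+C^\top C$.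
   Context: $\mathbf{1}_k$ denotes the all-ones vector in $\mathbb{R}^k$; $\otimes$ is the Kronecker product. *)

From HB Require Import structures.
From mathcomp Require Import all_boot all_order all_algebra.
Set Implicit Arguments. Unset Strict Implicit. Unset Printing Implicit Defensive.
Import Order.TTheory GRing.Theory Num.Theory.
Local Open Scope ring_scope.

Lemma ord_divn_lt (m n : nat) (i : 'I_(m * n)) : (i %/ n < m)%N.
Proof.
case: n i => [|n] i; first by case: i => i; rewrite muln0.
by rewrite ltn_divLR // ltn_ord.
Qed.

Lemma ord_modn_lt (m n : nat) (i : 'I_(m * n)) : (i %% n < n)%N.
Proof.
case: n i => [|n] i; first by case: i => i; rewrite muln0.
by rewrite ltn_mod.
Qed.

Definition ord_div (m n : nat) (i : 'I_(m * n)) : 'I_m := Ordinal (ord_divn_lt i).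
Definition ord_mod (m n : nat) (i : 'I_(m * n)) : 'I_n := Ordinal (ord_modn_lt i).

(* Kronecker product A (x) B; row (i1,i2) <-> i1 * m2 + i2, column
   (j1,j2) <-> j1 * n2 + j2 (standard block layout). *)
Definition kron {R : pzRingType} (m1 n1 m2 n2 : nat)
  (A : 'M[R]_(m1, n1)) (B : 'M[R]_(m2, n2)) : 'M[R]_(m1 * m2, n1 * n2) :=
  \matrix_(i, j) (A (ord_div i) (ord_div j) * B (ord_mod i) (ord_mod j)).

(* An undirected simple graph on vertex set 'I_V with m edges, each edge e
   given together with an orientation (src e -> tgt e). *)
Definition simple_oriented_graph (V m : nat) (src tgt : 'I_m -> 'I_V) : Prop :=
  (forall e, src e != tgt e) /\
  (forall e f, (src e == src f) && (tgt e == tgt f)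
               || (src e == tgt f) && (tgt e == src f) -> e = f).

Definition adj (V m : nat) (src tgt : 'I_m -> 'I_V) : rel 'I_V :=
  fun u v => [exists e, ((src e == u) && (tgt e == v))
                        || ((src e == v) && (tgt e == u))].

Definition graph_connected (V m : nat) (src tgt : 'I_m -> 'I_V) : Prop :=
  forall u v : 'I_V, connect (adj src tgt) u v.

Definition incidence {R : pzRingType} (V m : nat) (src tgt : 'I_m -> 'I_V)
  : 'M[R]_(m, V) :=
  \matrix_(e, v) ((v == src e)%:R - (v == tgt e)%:R).

Lemma sum_const_n (T n : nat) : (\sum_(t < T) n)%N = (T * n)%N.
Proof. by rewrite sum_nat_const card_ord. Qed.

Definition blockdiag {R : pzRingType} (T n : nat) (m : 'I_T -> nat)
  (C : forall t : 'I_T, 'M[R]_(m t, n)) : 'M[R]_(\sum_(t < T) m t, T * n) :=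
  castmx (erefl, sum_const_n T n)
    (@mxblock _ T T m (fun _ => n) (fun i j => if i == j then C i else 0)).

Definition vstack {R : pzRingType} (T n : nat) (m : 'I_T -> nat)
  (C : forall t : 'I_T, 'M[R]_(m t, n)) : 'M[R]_(\sum_(t < T) m t, n) :=
  @mxcol _ T m n C.

(* Since A = mu M^T M + C^T C is a sum of Gram matrices, x^T A x = mu |Mx|^2 + |Cx|^2,
   so A x = 0 forces M x = 0 and C x = 0.  Cutting x into T blocks x_t of size n,
   M x = 0 says that x_t is constant along the edges of G, hence, G being
   connected, every x_t equals one vector y; then C x = 0 says C_t y = 0 for all t,
   i.e. O_T y = 0, and since O_T 1 = 0 and rank O_T = n - 1, y is a multiple of 1.
   Being symmetric with kernel span(1), A has range 1^perp, which contains the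
   columns of P because they sum to zero. *)

From HB Require Import structures.
From mathcomp Require Import all_boot all_order all_algebra zify.
Set Implicit Arguments. Unset Strict Implicit. Unset Printing Implicit Defensive.
Import Order.TTheory GRing.Theory Num.Theory.
Local Open Scope ring_scope.

Section KronIndex.
Variables T n : nat.

Lemma kron_idx_subproof (t : 'I_T) (j : 'I_n) : (t * n + j < T * n)%N.
Proof. have := ltn_ord t; have := ltn_ord j; nia. Qed.

Definition kron_idx (t : 'I_T) (j : 'I_n) : 'I_(T * n) :=
  Ordinal (kron_idx_subproof t j).

Lemma ord_div_kron_idx t j : ord_div (kron_idx t j) = t.
Proof.
apply/val_inj => /=; have n_gt0 : (0 < n)%N by apply: leq_ltn_trans (ltn_ord j).
by rewrite divnMDl // divn_small ?addn0.
Qed.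

Lemma ord_mod_kron_idx t j : ord_mod (kron_idx t j) = j.
Proof. by apply/val_inj => /=; rewrite modnMDl modn_small. Qed.

Lemma kron_idx_div_mod (k : 'I_(T * n)) : kron_idx (ord_div k) (ord_mod k) = k.
Proof. by apply/val_inj => /=; rewrite -divn_eq. Qed.

Lemma big_kron_idx (V : nmodType) (F : 'I_(T * n) -> V) :
  \sum_(k < T * n) F k = \sum_(t < T) \sum_(j < n) F (kron_idx t j).
Proof.
rewrite pair_big (reindex (fun p : 'I_T * 'I_n => kron_idx p.1 p.2)) //.
exists (fun k => (ord_div k, ord_mod k)) => [[t j] _|k _] /=.
  by rewrite ord_div_kron_idx ord_mod_kron_idx.
by rewrite kron_idx_div_mod.
Qed.

End KronIndex.

Definition blocks (R : pzRingType) (T n : nat) (x : 'cV[R]_(T * n)) : 'M[R]_(T, n) :=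
  \matrix_(t, j) x (kron_idx t j) 0.

Section Blocks.
Variables (R : pzRingType) (T n : nat).

Lemma blocks_inj : injective (@blocks R T n).
Proof.
move=> x y /matrixP xy; apply/matrixP => k l; rewrite ord1 -(kron_idx_div_mod k).
by have := xy (ord_div k) (ord_mod k); rewrite !mxE.
Qed.

Lemma blocks0 : blocks (0 : 'cV[R]_(T * n)) = 0.
Proof. by apply/matrixP => t j; rewrite !mxE. Qed.

Lemma blocks_const a : blocks (const_mx a : 'cV[R]_(T * n)) = const_mx a.
Proof. by apply/matrixP => t j; rewrite !mxE. Qed.

Lemma blocks_kron_mx1 p (A : 'M[R]_(p, T)) (x : 'cV[R]_(T * n)) :
  blocks (kron A 1%:M *m x) = A *m blocks x.
Proof.
apply/matrixP => i j; rewrite !mxE big_kron_idx; apply: eq_bigr => t _.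
rewrite (bigD1 j) //= !mxE !ord_div_kron_idx !ord_mod_kron_idx eqxx mulr1.
rewrite big1 ?addr0 // => l /negbTE lj.
by rewrite !mxE !ord_div_kron_idx !ord_mod_kron_idx eq_sym lj mulr0 mul0r.
Qed.

Lemma mul_blockdiag_mx (m : 'I_T -> nat) (C : forall t, 'M[R]_(m t, n))
    (x : 'cV[R]_(T * n)) :
  blockdiag C *m x = \mxcol_t (C t *m (row t (blocks x))^T).
Proof.
have -> : blockdiag C *m x = @mxblock _ T T m (fun _ => n)
    (fun i j => if i == j then C i else 0) *m castmx (esym (sum_const_n T n), erefl) x.
  rewrite /blockdiag; move: (sum_const_n T n) x.
  by case: (T * n)%N / => x; rewrite !castmx_id.
set y := castmx _ x.
rewrite -(submxcolK y) mul_mxblock_mxrow; apply: eq_mxcol => t.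
rewrite (bigD1 t) //= eqxx big1 ?addr0; last first.
  by move=> s /negbTE; rewrite eq_sym => ->; rewrite mul0mx.
congr (_ *m _); apply/matrixP => j l; rewrite !mxE castmxE ord1 /=.
congr (x _ _); apply/val_inj.
transitivity (nat_of_ord (@tagnat.Rank T (fun _ => n) t j)); first by [].
rewrite tagnat.RankEsum -(big_ord_widen_cond T xpredT (fun _ => n) (ltnW (ltn_ord t))).
by rewrite sum_nat_const card_ord.
Qed.

End Blocks.

Section Incidence.
Variables (R : pzRingType) (V m : nat) (src tgt : 'I_m -> 'I_V).

Lemma mul_incidence_mx p (X : 'M[R]_(V, p)) :
  incidence src tgt *m X = \matrix_(e, j) (X (src e) j - X (tgt e) j).
Proof.
apply/matrixP => e j; rewrite !mxE.
under eq_bigr do rewrite !mxE mulrBl.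
rewrite sumrB (bigD1 (src e)) // [X in _ - X](bigD1 (tgt e)) //= !eqxx !mul1r.
by rewrite !big1 ?addr0 // => v /negbTE ->; rewrite mul0r.
Qed.

Lemma mul_incidence_const p a : incidence src tgt *m (const_mx a : 'M[R]_(V, p)) = 0.
Proof. by rewrite mul_incidence_mx; apply/matrixP => e j; rewrite !mxE subrr. Qed.

Lemma connected_incidence_ker p (X : 'M[R]_(V, p)) :
  graph_connected src tgt -> incidence src tgt *m X = 0 -> forall u v, row u X = row v X.
Proof.
move=> conn /matrixP X0 u v; have /connectP[s path_s ->] := conn u v.
have edgeE e : row (src e) X = row (tgt e) X.
  apply/rowP => j; apply/eqP; rewrite !mxE -subr_eq0.
  by have := X0 e j; rewrite mul_incidence_mx !mxE => ->.
elim: s u path_s => //= w s IHs u /andP[/existsP[e uw] /IHs <-].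
by case/orP: uw => /andP[/eqP <- /eqP <-]; rewrite edgeE.
Qed.

End Incidence.

Section Gram.
Variable R : realFieldType.

Lemma trmx_mul_cV_ge0 p (u : 'cV[R]_p) : 0 <= (u^T *m u) 0 0.
Proof. by rewrite mxE sumr_ge0 // => i _; rewrite mxE -expr2 sqr_ge0. Qed.

Lemma trmx_mul_cV_eq0 p (u : 'cV[R]_p) : ((u^T *m u) 0 0 == 0) = (u == 0).
Proof.
apply/idP/eqP => [|->]; last by rewrite mulmx0 mxE.
rewrite mxE psumr_eq0 => [/allP u0|i _]; last by rewrite mxE -expr2 sqr_ge0.
apply/matrixP => i j; rewrite ord1 mxE.
by have := u0 i (mem_index_enum i); rewrite mxE -expr2 sqrf_eq0 => /eqP.
Qed.

Lemma gram_sum_mul_eq0 p q r (M : 'M[R]_(p, r)) (C : 'M[R]_(q, r)) mu (x : 'cV_r) :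
  0 < mu -> (mu *: (M^T *m M) + C^T *m C) *m x = 0 -> M *m x = 0 /\ C *m x = 0.
Proof.
move=> mu_gt0 Ax0.
have : (x^T *m ((mu *: (M^T *m M) + C^T *m C) *m x)) 0 0 == 0.
  by rewrite Ax0 mulmx0 mxE.
rewrite mulmxDl mulmxDr -!scalemxAl -!scalemxAr !mulmxA -!trmx_mul -!mulmxA.
rewrite mxE [X in X + _]mxE paddr_eq0 ?mulr_ge0 ?(ltW mu_gt0) ?trmx_mul_cV_ge0 //.
by rewrite mulf_eq0 gt_eqF //= !trmx_mul_cV_eq0 => /andP[/eqP-> /eqP->].
Qed.

End Gram.

Lemma const_mx1_neq0 (R : nzRingType) p q :
  (0 < p)%N -> (0 < q)%N -> (const_mx 1 : 'M[R]_(p, q)) != 0.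
Proof.
move=> p_gt0 q_gt0; apply/eqP => /matrixP/(_ (Ordinal p_gt0) (Ordinal q_gt0)).
by rewrite !mxE; apply/eqP/oner_neq0.
Qed.

Section FieldMx.
Variable F : fieldType.

Lemma rank_cV n (u : 'cV[F]_n) : \rank u = (u != 0).
Proof. by rewrite -mxrank_tr rank_rV -(inj_eq trmx_inj) trmxK trmx0. Qed.

Lemma ker_corank1 k n (O : 'M[F]_(k, n)) (u y : 'cV[F]_n) :
  \rank O = n.-1 -> u != 0 -> O *m u = 0 -> O *m y = 0 -> exists c, y = c *: u.
Proof.
move=> rankO u_neq0 Ou Oy.
have kerT (v : 'cV[F]_n) : O *m v = 0 -> (v^T <= kermx O^T)%MS.
  by move=> Ov; apply/sub_kermxP; rewrite -trmx_mul Ov trmx0.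
have rank_uT : \rank u^T = 1%N by rewrite mxrank_tr rank_cV u_neq0.
have n_gt0 : (0 < n)%N by rewrite -rank_uT rank_leq_col.
have kerO_u : (kermx O^T <= u^T)%MS.
  rewrite -(mxrank_leqif_sup (kerT u Ou)).2 rank_uT mxrank_ker mxrank_tr rankO.
  by apply/eqP; lia.
have /submxP[D yD] := submx_trans (kerT y Oy) kerO_u; exists (D 0 0).
by rewrite -[y]trmxK yD (mx11_scalar D) mul_scalar_mx linearZ /= trmxK mxE mulr1n.
Qed.

Lemma sym_mx_range N p (A : 'M[F]_N) (u : 'cV[F]_N) (B : 'M[F]_(N, p)) :
    A^T = A -> u != 0 -> A *m u = 0 ->
    (forall x, A *m x = 0 -> exists c, x = c *: u) ->
  u^T *m B = 0 -> exists X, B = A *m X.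
Proof.
move=> A_sym u_neq0 Au kerA uB.
have A_sub : (A <= kermx u)%MS by apply/sub_kermxP.
have B_sub : (B^T <= kermx u)%MS.
  by apply/sub_kermxP; rewrite -[u]trmxK -trmx_mul uB trmx0.
have kerA_sub : (kermx A <= u^T)%MS.
  apply/row_subP => i; set w := row i (kermx A).
  have /kerA[c wc] : A *m w^T = 0.
    by rewrite -A_sym -trmx_mul -row_mul mulmx_ker row0 trmx0.
  by rewrite -[w]trmxK wc linearZ /= scalemx_sub.
have rank_u : \rank u = 1%N by rewrite rank_cV u_neq0.
have ker_sub : (kermx u <= A)%MS.
  rewrite -(mxrank_leqif_sup A_sub).2.
  have := mxrankS A_sub; have := mxrankS kerA_sub.
  by rewrite !mxrank_ker mxrank_tr rank_u; lia.
have /submxP[X BX] := submx_trans B_sub ker_sub.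
by exists X^T; rewrite -[B]trmxK BX trmx_mul A_sym.
Qed.

Lemma const_mul_centering_mx n : n%:R != 0 :> F ->
  (const_mx 1 : 'rV[F]_n) *m (1%:M - n%:R^-1 *: const_mx 1) = 0.
Proof.
move=> n_neq0; rewrite mulmxBr mulmx1 -scalemxAr.
have -> : (const_mx 1 : 'rV[F]_n) *m (const_mx 1 : 'M_n) = const_mx n%:R.
  apply/matrixP => i j; rewrite !mxE (eq_bigr (fun=> 1)) ?sumr_const ?card_ord //.
  by move=> k _; rewrite !mxE mulr1.
by rewrite scalemx_const mulVf // subrr.
Qed.

End FieldMx.

Lemma mul_const_kron1mx (R : pzRingType) T n p (B : 'M[R]_(n, p)) :
  (const_mx 1 : 'rV_(T * n)) *m kron (1%:M : 'M_T) B =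
  \row_k ((const_mx 1 : 'rV_n) *m B) 0 (ord_mod k).
Proof.
apply/rowP => k; rewrite !mxE big_kron_idx (bigD1 (ord_div k)) //=.
rewrite [X in _ + X]big1 ?addr0 => [|t /negbTE tk].
  by apply: eq_bigr => j _; rewrite !mxE ord_div_kron_idx ord_mod_kron_idx eqxx mul1r.
by apply: big1 => j _; rewrite !mxE ord_div_kron_idx tk !mul0r mulr0.
Qed.

Section ConsensusKernel.
Variables (R : realFieldType) (n T mE : nat) (srcE tgtE : 'I_mE -> 'I_T).
Variables (m : 'I_T -> nat) (C : forall t, 'M[R]_(m t, n)) (mu : R).
Hypotheses (n_gt0 : (0 < n)%N) (T_gt0 : (0 < T)%N).
Hypotheses (connE : graph_connected srcE tgtE) (mu_gt0 : 0 < mu).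
Hypotheses (C1 : forall t, C t *m (const_mx 1 : 'cV_n) = 0) (rankC : \rank (vstack C) = n.-1).

Local Notation M := (kron (incidence srcE tgtE) (1%:M : 'M[R]_n)).

Lemma consensus_ker (x : 'cV[R]_(T * n)) :
  (mu *: (M^T *m M) + (blockdiag C)^T *m blockdiag C) *m x = 0 <->
  exists c, x = c *: const_mx 1.
Proof.
split=> [/(gram_sum_mul_eq0 mu_gt0)[Mx Cx] | [c ->]].
  set X := blocks x.
  have rowsX u v : row u X = row v X.
    by apply: connected_incidence_ker connE _ u v; rewrite -blocks_kron_mx1 Mx blocks0.
  pose t0 := Ordinal T_gt0; pose y := (row t0 X)^T.
  have Cy t : C t *m y = 0.
    move: Cx; rewrite mul_blockdiag_mx => /(congr1 (fun B => submxcol B t)).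
    by rewrite mxcolK submxcol0 (rowsX t t0).
  have [c yc] : exists c, y = c *: const_mx 1.
    apply: ker_corank1 rankC (const_mx1_neq0 _ n_gt0 _) _ _ => //.
      by rewrite mxcol_mul (eq_mxcol C1) mxcol0.
    by rewrite mxcol_mul (eq_mxcol Cy) mxcol0.
  exists c; apply: blocks_inj; apply/matrixP => t j.
  transitivity (row t0 X 0 j); first by rewrite -(rowsX t) !mxE.
  by have := congr1 (fun v : 'cV_n => v j 0) yc; rewrite !mxE.
rewrite scalemx_const mulr1.
have M0 : M *m (const_mx c : 'cV_(T * n)) = 0.
  by apply: blocks_inj; rewrite blocks_kron_mx1 blocks_const mul_incidence_const blocks0.
have C0 : blockdiag C *m (const_mx c : 'cV_(T * n)) = 0.
  rewrite mul_blockdiag_mx -(mxcol0 (p_ := m)); apply: eq_mxcol => t.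
  by rewrite blocks_const row_const trmx_const -[c]mulr1 -scalemx_const -scalemxAr C1 scaler0.
by rewrite mulmxDl -scalemxAl -!mulmxA M0 C0 !mulmx0 scaler0 addr0.
Qed.

End ConsensusKernel.

Theorem proposition3 (R : realFieldType) (n T : nat)
  (hn : (2 <= n)%N) (hT : (2 <= T)%N)
  (* the graph G = ([T], E) with an arbitrary orientation of its edges *)
  (mE : nat) (srcE tgtE : 'I_mE -> 'I_T)
  (hG : simple_oriented_graph srcE tgtE)
  (hGc : graph_connected srcE tgtE)
  (* the graphs G_t = ([n], E_t) with arbitrary orientations *)
  (m : 'I_T -> nat) (src tgt : forall t : 'I_T, 'I_(m t) -> 'I_n)
  (hGt : forall t, simple_oriented_graph (src t) (tgt t))
  (mu : R) (hmu : 0 < mu) :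
  let D : 'M[R]_(mE, T) := incidence srcE tgtE in
  let M : 'M[R]_(mE * n, T * n) := kron D (1%:M : 'M[R]_n) in
  let Ct : forall t : 'I_T, 'M[R]_(m t, n) :=
    fun t => incidence (src t) (tgt t) in
  let C := blockdiag Ct in
  let O := vstack Ct in
  let P : 'M[R]_(T * n) :=
    kron (1%:M : 'M[R]_T) (1%:M - n%:R^-1 *: const_mx 1 : 'M[R]_n) in
  let A : 'M[R]_(T * n) := mu *: (M^T *m M) + C^T *m C in
  \rank O = n.-1 ->
  (forall x : 'cV[R]_(T * n), A *m x = 0 <-> exists c : R, x = c *: const_mx 1)
  /\ (exists X : 'M[R]_(T * n), P = A *m X).
Proof.
move=> D M Ct C O P A rankO.
have n_gt0 : (0 < n)%N by apply: leq_trans hn.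
have T_gt0 : (0 < T)%N by apply: leq_trans hT.
have kerA (x : 'cV_(T * n)) : A *m x = 0 <-> exists c, x = c *: const_mx 1.
  have Ct1 t : Ct t *m (const_mx 1 : 'cV_n) = 0 by exact: mul_incidence_const.
  exact: (consensus_ker n_gt0 T_gt0 hGc hmu Ct1 rankO).
split=> //; apply: (@sym_mx_range _ _ _ A (const_mx 1)).
- by rewrite /A linearD /= linearZ /= !trmx_mul !trmxK.
- by rewrite const_mx1_neq0 // muln_gt0 n_gt0 T_gt0.
- by apply/kerA; exists 1; rewrite scale1r.
- by move=> x /kerA.
rewrite trmx_const mul_const_kron1mx const_mul_centering_mx ?pnatr_eq0 -?lt0n //.
by apply/rowP => k; rewrite !mxE.
Qed.
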